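(* Let $G$ be a finite connected graph with chromatic number $\chi$ and let $c$ be a nice $\chi$-coloring of $G$. Then $h(c)\ge 2\chi-1$.
   Context: A proper $\chi$-coloring is a map $c:V(G)\to\{1,\dots,\chi\}$ with adjacent vertices receiving different colors; colors are considered modulo $\chi$. For such $c$, $D_c$ is the oriented graph on $V(G)$ with an arc $ab$ if and only if $\{a,b\}\in E(G)$ and $c(b)\equiv c(a)+1\pmod{\chi}$. The coloring $c$ is nice if $D_c$ is acyclic and has exactly one sink (vertex of out-degree $0$). For an acyclic oriented graph $D$, its level partition is the unique partition $(V_1,\dots,V_k)$ of $V(D)$ such that $V_i$ is the set of sinks of the subdigraph of $D$ induced on $V(D)\setminus(V_1\cup\dots\cup V_{i-1})$; $k$ is the height of the partition. The height $h(c)$ of a nice coloring $c$ is the height of the level partition of $D_c$, equivalently the number of vertices in a longest oriented path of $D_c$. *)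

From mathcomp Require Import all_boot.
Set Implicit Arguments. Unset Strict Implicit. Unset Printing Implicit Defensive.

Section Defs.
Variable T : finType.

(* A finite simple graph is a symmetric irreflexive relation e on T. *)

Definition proper_coloring (e : rel T) (k : nat) (c : T -> nat) : Prop :=
  (forall x, 1 <= c x <= k) /\ (forall x y, e x y -> c x != c y).

Definition colorable (e : rel T) (k : nat) : Prop :=
  exists c : T -> nat, proper_coloring e k c.

Definition chromatic_number (e : rel T) (k : nat) : Prop :=
  colorable e k /\ (forall j, colorable e j -> k <= j).

Definition connected_graph (e : rel T) : Prop := forall x y, connect e x y.

Definition Dc (e : rel T) (k : nat) (c : T -> nat) : rel T :=
  fun a b => e a b && (c b == (c a).+1 %[mod k]).

Definition acyclic (D : rel T) : Prop :=
  forall (x : T) (p : seq T), path D x p -> x \notin p.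

Definition is_sink (D : rel T) (x : T) : bool := [forall y, ~~ D x y].

Definition nice (e : rel T) (k : nat) (c : T -> nat) : Prop :=
  acyclic (Dc e k c) /\ #|[pred x | is_sink (Dc e k c) x]| = 1.

Definition is_dpath (D : rel T) (s : seq T) : bool :=
  if s is x :: p then path D x p && uniq s else false.

(* Height: number of vertices of a longest oriented path. *)
Definition height (D : rel T) : nat :=
  \max_(n < #|T|.+1 | [exists t : n.-tuple T, is_dpath D t]) n.
End Defs.

(* Write L(v) for the number of vertices of a longest oriented path of D_c starting at v.
   Such a path ends at a sink, hence at the unique sink s, and colors increase by one
   along arcs, so c(v) + L(v) is constant modulo chi.  If every L(v) were at most
   2 chi - 2, folding L (keep L(v) if L(v) < chi, else use L(v) - chi + 1) would be a
   proper coloring with chi - 1 colors: equal folded values on an edge ab mean either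
   L(a) = L(b), forcing c(a) = c(b), or L(b) = L(a) + chi - 1, forcing ab to be an arc
   and hence L(b) < L(a). *)

From mathcomp Require Import all_boot zify.
Set Implicit Arguments. Unset Strict Implicit. Unset Printing Implicit Defensive.

Section Depth.
Variables (T : finType) (D : rel T).
Hypothesis acyclicD : acyclic D.

Lemma acyclic_path_uniq x p : path D x p -> uniq (x :: p).
Proof.
elim: p x => [|y p IHp] x //= /andP[Dxy Dp].
have /= -> := IHp y Dp; rewrite andbT.
by apply: (acyclicD (p := y :: p)); rewrite /= Dxy.
Qed.

Lemma acyclic_path_size x p : path D x p -> size p < #|T|.
Proof. by move/acyclic_path_uniq/card_uniqP => /= <-; apply: max_card. Qed.

Definition depth (v : T) : nat :=
  (\max_(i < #|T| | [exists p : i.-tuple T, path D v p]) i).+1.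

Lemma depth_gt_size v p : path D v p -> size p < depth v.
Proof.
move=> Dp; rewrite ltnS.
apply: (@leq_bigmax_cond _ (fun i : 'I_#|T| => [exists q : i.-tuple T, path D v q])
  val (Ordinal (acyclic_path_size Dp))).
by apply/existsP; exists (in_tuple p).
Qed.

Lemma depth_longest_path v : exists2 p, path D v p & depth v = (size p).+1.
Proof.
have T_gt0 : 0 < #|T| by apply/card_gt0P; exists v.
have nil_path : [exists p : (Ordinal T_gt0).-tuple T, path D v p].
  by apply/existsP; exists [tuple].
rewrite /depth (bigmax_eq_arg (Ordinal T_gt0)) //.
case: arg_maxnP => // i /existsP[p Dp] _.
by exists p; rewrite // size_tuple.
Qed.

Lemma depth_path_to_sink v :
  exists p, [/\ path D v p, depth v = (size p).+1 & is_sink D (last v p)].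
Proof.
have [p Dp depth_v] := depth_longest_path v.
exists p; split=> //; apply/forallP=> y; apply/negP=> Dy.
have := @depth_gt_size v (rcons p y).
by rewrite rcons_path Dp Dy size_rcons depth_v ltnn => /(_ isT).
Qed.

Lemma depth_arc a b : D a b -> depth b < depth a.
Proof.
move=> Dab; have [p Dp ->] := depth_longest_path b.
by apply: (@depth_gt_size a (b :: p)); rewrite /= Dab.
Qed.

Lemma depth_le_height v : depth v <= height D.
Proof.
have [p Dp ->] := depth_longest_path v.
have size_lt : size (v :: p) < #|T|.+1 by rewrite ltnS (acyclic_path_size Dp).
apply: (@leq_bigmax_cond _ (fun i : 'I_#|T|.+1 => [exists q : i.-tuple T, is_dpath D q])
  val (Ordinal size_lt)).
apply/existsP; exists (in_tuple (v :: p)).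
by apply/andP; split; last exact: acyclic_path_uniq Dp.
Qed.

End Depth.

Lemma Dc_path_color (T : finType) (e : rel T) k (c : T -> nat) v p :
  path (Dc e k c) v p -> c (last v p) = c v + size p %[mod k].
Proof.
elim: p v => [|y p IHp] v /=; first by rewrite addn0.
case/andP=> /andP[_ /eqP cy] Dp.
by rewrite (IHp y Dp) -modnDml cy modnDml addSn addnS.
Qed.

Lemma eq_modn_range k x y :
  0 < x <= k -> 0 < y <= k -> x = y %[mod k] -> x = y.
Proof.
move=> /andP[x_gt0 x_le] /andP[y_gt0 y_le] xy.
have : x.-1 + 1 == y.-1 + 1 %[mod k] by rewrite !addn1 !prednK // xy.
by rewrite eqn_modDr !modn_small => [/eqP||]; lia.
Qed.

Section NiceColoring.
Variables (T : finType) (e : rel T) (k : nat) (c : T -> nat).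
Hypotheses (e_sym : symmetric e) (c_proper : proper_coloring e k c)
  (c_nice : nice e k c).

Local Notation D := (Dc e k c).
Local Notation L := (depth D).

Lemma color_depth_mod u v : c u + L u = c v + L v %[mod k].
Proof.
have [acyclicD /eqP/card1P[s sinks]] := c_nice.
suff to_sink x : c x + L x = (c s).+1 %[mod k] by rewrite !to_sink.
have [p [Dp -> sink_end]] := depth_path_to_sink acyclicD x.
have /eqP end_s : last x p \in pred1 s by rewrite -sinks.
by rewrite addnS -addn1 -modnDml -(Dc_path_color Dp) end_s modnDml addn1.
Qed.

Lemma adj_depth_neq a b : e a b -> L a != L b.
Proof.
have [c_range c_adj] := c_proper.
move=> eab; apply: contra (c_adj _ _ eab) => /eqP L_ab; apply/eqP.
apply: eq_modn_range (c_range a) (c_range b) _.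
by apply/eqP; rewrite -(eqn_modDr (L a)) {2}L_ab (color_depth_mod a b).
Qed.

Lemma adj_depth_shift a b : e a b -> L b != L a + k.-1.
Proof.
have [c_range _] := c_proper.
have k_gt0 : 0 < k by case/andP: (c_range a); apply: leq_trans.
move=> eab; apply/eqP=> L_b.
suff /(depth_arc c_nice.1) : D a b by rewrite L_b; lia.
rewrite /Dc eab; apply/eqP/eqP.
rewrite -(eqn_modDr (L a + k.-1)) -L_b (color_depth_mod b a) L_b.
have -> : (c a).+1 + (L a + k.-1) = c a + L a + k by lia.
by rewrite modnDr.
Qed.

Definition fold_depth (v : T) : nat := if L v < k then L v else L v - k.-1.

Lemma fold_depth_proper : height D <= 2 * k - 2 -> proper_coloring e k.-1 fold_depth.
Proof.
move=> height_le; split=> [x | a b eab].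
  have := depth_le_height c_nice.1 x; have : 0 < L x by [].
  by rewrite /fold_depth; case: ifP; lia.
have eba : e b a by rewrite e_sym.
have := adj_depth_neq eab; have := adj_depth_shift eab; have := adj_depth_shift eba.
by rewrite /fold_depth; case: ifP; case: ifP; lia.
Qed.

End NiceColoring.

Theorem lemma6 (T : finType) (e : rel T) (chi : nat) (c : T -> nat) :
  symmetric e -> irreflexive e -> connected_graph e ->
  chromatic_number e chi -> proper_coloring e chi c -> nice e chi c ->
  2 * chi - 1 <= height (Dc e chi c).
Proof.
move=> e_sym _ _ [_ chi_min] c_proper c_nice.
have [-> // | chi_gt0] := posnP chi.
rewrite leqNgt; apply/negP=> short.
have height_le : height (Dc e chi c) <= 2 * chi - 2 by lia.
have /chi_min : colorable e chi.-1.
  by exists (fold_depth e chi c); apply: fold_depth_proper.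
lia.
Qed.
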